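(* Let $L$ be an $\omega$-regular language over $\Sigma$, let $M=(\Sigma,Q,q_0,\delta)$ be a complete DFA, and let $u\in\Sigma^*$. Define the relation $\approx^u_{R'}$ on $\Sigma^*$ by $x\approx^u_{R'}y$ iff for every $v\in\Sigma^*$, $\big(M(uxv)=M(u)\wedge u(xv)^\omega\in L\big)\Leftrightarrow\big(M(uyv)=M(u)\wedge u(yv)^\omega\in L\big)$. Then the index of $\approx^u_{R'}$ is bounded by $|Q|\cdot|\approx^u_P|$, where $|\approx^u_P|$ is the index of $\approx^u_P$.
   Context: For a complete DFA $M$ and finite word $w$, $M(w)$ is the state reached from the initial state on $w$. The relation $\approx^u_P$ on $\Sigma^*$ is defined by $x\approx^u_P y$ iff for all $v\in\Sigma^*$, $u(xv)^\omega\in L\Leftrightarrow u(yv)^\omega\in L$. The index of an equivalence relation is its number of equivalence classes. *)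

From mathcomp Require Import all_boot.
Set Implicit Arguments. Unset Strict Implicit. Unset Printing Implicit Defensive.

Definition oword (Sigma : Type) := nat -> Sigma.

Record DFA (Sigma Q : finType) := { d_init : Q; d_trans : Q -> Sigma -> Q }.

Definition run_dfa (Sigma Q : finType) (M : DFA Sigma Q) (w : seq Sigma) : Q :=
  foldl (d_trans M) (d_init M) w.

Record NBA (Sigma S : finType) := {
  b_init : S -> bool;
  b_trans : S -> Sigma -> S -> bool;
  b_acc : S -> bool }.

Definition nba_accepts (Sigma S : finType) (A : NBA Sigma S) (w : oword Sigma) : Prop :=
  exists r : nat -> S,
    b_init A (r 0) /\ (forall i, b_trans A (r i) (w i) (r i.+1)) /\
    (forall n, exists i, n <= i /\ b_acc A (r i)).

Definition omega_regular (Sigma : finType) (L : oword Sigma -> Prop) : Prop :=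
  exists (S : finType) (A : NBA Sigma S), forall w, L w <-> nba_accepts A w.

(* The omega-word u v^omega, for v nonempty. *)
Definition uvw (Sigma : Type) (x0 : Sigma) (u v : seq Sigma) : oword Sigma :=
  fun i => if i < size u then nth x0 u i else nth x0 v ((i - size u) %% size v).

(* "u v^omega \in L"; v^omega is only an omega-word when v is nonempty,
   so the membership is taken to be false for v = [::]. *)
Definition in_L_uvw (Sigma : finType) (L : oword Sigma -> Prop) (u v : seq Sigma) : Prop :=
  match v with
  | [::] => False
  | x0 :: _ => L (uvw x0 u v)
  end.

Definition approxP (Sigma : finType) (L : oword Sigma -> Prop) (u x y : seq Sigma) : Prop :=
  forall v : seq Sigma, in_L_uvw L u (x ++ v) <-> in_L_uvw L u (y ++ v).

Definition approxR' (Sigma Q : finType) (L : oword Sigma -> Prop) (M : DFA Sigma Q)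
    (u x y : seq Sigma) : Prop :=
  forall v : seq Sigma,
    (run_dfa M (u ++ x ++ v) = run_dfa M u /\ in_L_uvw L u (x ++ v)) <->
    (run_dfa M (u ++ y ++ v) = run_dfa M u /\ in_L_uvw L u (y ++ v)).

Definition has_index (Sigma : finType) (E : seq Sigma -> seq Sigma -> Prop) (n : nat) : Prop :=
  exists reps : seq (seq Sigma),
    size reps = n /\
    (forall w, exists2 r, r \in reps & E w r) /\
    (forall i j, i < n -> j < n -> i <> j -> ~ E (nth [::] reps i) (nth [::] reps j)).

(* Two words that reach the same state of M after u and are ≈P^u-equivalent are
   ≈R'^u-equivalent, since M(uxv) is determined by M(ux) and v.  Labelling each
   word by its state M(uw) and its ≈P^u-class therefore yields at most
   |Q| * |≈P^u| labels, each of which lies inside one ≈R'^u-class. *)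

From mathcomp Require Import all_boot.
From Stdlib Require Import Classical.

Set Implicit Arguments.
Unset Strict Implicit.

Lemma exists_inequiv_subcover (T : eqType) (x0 : T) (E : T -> T -> Prop) (s : seq T) :
  (forall x, E x x) -> (forall x y, E x y -> E y x) ->
  exists reps : seq T, size reps <= size s /\
    (forall w, w \in s -> exists2 r, r \in reps & E w r) /\
    (forall i j, i < size reps -> j < size reps -> i <> j ->
       ~ E (nth x0 reps i) (nth x0 reps j)).
Proof.
move=> E_refl E_sym; elim: s => [|a s [reps [size_reps [cover inequiv]]]].
  by exists [::]; split => //; split => // w.
have [[r r_reps E_ar]|not_covered] := classic (exists2 r, r \in reps & E a r).
  exists reps; split; first exact: leqW.
  split=> // w; rewrite in_cons => /orP[/eqP ->|w_s]; first by exists r.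
  exact: cover.
exists (a :: reps); split=> //; split.
  move=> w; rewrite in_cons => /orP[/eqP ->|w_s]; first by exists a; rewrite ?mem_head.
  by have [r r_reps E_wr] := cover w w_s; exists r; rewrite ?in_cons ?r_reps ?orbT.
case=> [|i] [|j] //= lt_i lt_j ne_ij.
- by move=> E_ar; apply: not_covered; exists (nth x0 reps j); first exact: mem_nth.
- by move=> E_ra; apply: not_covered; exists (nth x0 reps i); [exact: mem_nth | exact: E_sym].
- by apply: inequiv => // eq_ij; apply: ne_ij; rewrite eq_ij.
Qed.

Lemma exists_cover_of_labelling (T K : eqType) (lab : T -> K -> Prop) (ks : seq K) :
  exists s : seq T, size s <= size ks /\
    forall w k, k \in ks -> lab w k -> exists2 r, r \in s & lab r k.
Proof.
elim: ks => [|k ks [s [size_s cover]]]; first by exists [::].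
have [[r lab_r]|unattained] := classic (exists r, lab r k).
  exists (r :: s); split=> // w k'; rewrite in_cons => /orP[/eqP ->|k'_ks] lab_w.
    by exists r; rewrite ?mem_head.
  by have [r' r'_s lab_r'] := cover w k' k'_ks lab_w; exists r'; rewrite ?in_cons ?r'_s ?orbT.
exists s; split; first exact: leqW.
move=> w k'; rewrite in_cons => /orP[/eqP ->|k'_ks] lab_w.
  by case: unattained; exists w.
exact: cover k'_ks lab_w.
Qed.

Lemma has_index_of_cover (Sigma : finType) (E : seq Sigma -> seq Sigma -> Prop)
    (s : seq (seq Sigma)) :
  (forall x, E x x) -> (forall x y, E x y -> E y x) ->
  (forall x y z, E x y -> E y z -> E x z) ->
  (forall w, exists2 r, r \in s & E w r) ->
  exists n, has_index E n /\ n <= size s.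
Proof.
move=> E_refl E_sym E_trans cover.
have [reps [size_reps [cover_s inequiv]]] := exists_inequiv_subcover [::] s E_refl E_sym.
exists (size reps); split=> //; exists reps; split=> //; split=> // w.
have [t t_s E_wt] := cover w; have [r r_reps E_tr] := cover_s t t_s.
by exists r => //; apply: E_trans E_wt E_tr.
Qed.

Lemma has_index_of_labelling (Sigma K : finType) (E : seq Sigma -> seq Sigma -> Prop)
    (lab : seq Sigma -> K -> Prop) :
  (forall x, E x x) -> (forall x y, E x y -> E y x) ->
  (forall x y z, E x y -> E y z -> E x z) ->
  (forall w, exists k, lab w k) ->
  (forall x y k, lab x k -> lab y k -> E x y) ->
  exists n, has_index E n /\ n <= #|K|.
Proof.
move=> E_refl E_sym E_trans labelled lab_E.
have [s [size_s cover]] := exists_cover_of_labelling lab (enum K).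
have [|n [index_n le_n]] := has_index_of_cover (s := s) E_refl E_sym E_trans.
  move=> w; have [k lab_w] := labelled w.
  have [r r_s lab_r] := cover w k (mem_enum K k) lab_w.
  by exists r => //; apply: lab_E lab_w lab_r.
by exists n; split=> //; rewrite cardE (leq_trans le_n).
Qed.

Lemma run_dfa_cat (Sigma Q : finType) (M : DFA Sigma Q) (w v : seq Sigma) :
  run_dfa M (w ++ v) = foldl (d_trans M) (run_dfa M w) v.
Proof. exact: foldl_cat. Qed.

Section Approx.

Variables (Sigma Q : finType) (L : oword Sigma -> Prop) (M : DFA Sigma Q).
Variable u : seq Sigma.

Lemma approxP_sym x y : approxP L u x y -> approxP L u y x.
Proof. by move=> Pxy v; split=> /Pxy. Qed.

Lemma approxP_trans x y z : approxP L u x y -> approxP L u y z -> approxP L u x z.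
Proof. by move=> Pxy Pyz v; split=> [/Pxy/Pyz|/Pyz/Pxy]. Qed.

Lemma approxR'_refl x : approxR' L M u x x.
Proof. by []. Qed.

Lemma approxR'_sym x y : approxR' L M u x y -> approxR' L M u y x.
Proof. by move=> Rxy v; split=> /Rxy. Qed.

Lemma approxR'_trans x y z :
  approxR' L M u x y -> approxR' L M u y z -> approxR' L M u x z.
Proof. by move=> Rxy Ryz v; split=> [/Rxy/Ryz|/Ryz/Rxy]. Qed.

Lemma approxR'_of_run_approxP x y :
  run_dfa M (u ++ x) = run_dfa M (u ++ y) -> approxP L u x y -> approxR' L M u x y.
Proof.
move=> run_xy Pxy v; rewrite !catA (run_dfa_cat M (u ++ x)) (run_dfa_cat M (u ++ y)) run_xy.
by split=> -[-> in_L]; split=> //; apply/Pxy.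
Qed.

End Approx.

Theorem lemma12 (Sigma Q : finType) (L : oword Sigma -> Prop) (M : DFA Sigma Q)
    (u : seq Sigma) (nP : nat) :
  omega_regular L ->
  has_index (approxP L u) nP ->
  exists nR, has_index (approxR' L M u) nR /\ nR <= #|Q| * nP.
Proof.
move=> _ [pr [size_pr [cover_pr _]]].
pose lab w (k : Q * 'I_nP) := run_dfa M (u ++ w) = k.1 /\ approxP L u w (nth [::] pr k.2).
have labelled w : exists k, lab w k.
  have [r r_pr Pwr] := cover_pr w.
  have lt_r : index r pr < nP by rewrite -size_pr index_mem.
  by exists (run_dfa M (u ++ w), Ordinal lt_r); rewrite /lab /= nth_index.
have lab_R x y k : lab x k -> lab y k -> approxR' L M u x y.
  move=> [run_x Px] [run_y Py]; apply: approxR'_of_run_approxP.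
    by rewrite run_x run_y.
  exact: approxP_trans Px (approxP_sym Py).
have [n [index_n le_n]] :=
  has_index_of_labelling (@approxR'_refl _ _ L M u) (@approxR'_sym _ _ L M u)
    (@approxR'_trans _ _ L M u) labelled lab_R.
by exists n; rewrite card_prod card_ord in le_n.
Qed.
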